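(* Let $\Delta$ be a closed pure simplicial complex of dimension $m-1\ge2$ whose clique decomposition $\Delta=\Delta_1\cup\cdots\cup\Delta_r$ satisfies conditions (i) and (ii) below, and let $G_\Delta$ be its graph. Then each vertex $v_i$ of $G_\Delta$ has degree at most $\min\{|V(\Delta_i)|,\,2\dim\Delta\}$.
   Context: $\Delta$ is a pure $(m-1)$-dimensional simplicial complex on $[n]$. Clique decomposition: let $\mathcal{S}$ be the set of simplices $\Gamma$ with vertices in $[n]$, $\dim\Gamma\ge m-1$, whose $(m-1)$-skeleton is contained in $\Delta$; the maximal elements $\Gamma_1,\dots,\Gamma_r$ of $\mathcal{S}$ give the cliques $\Delta_i=\Gamma_i^{(m-1)}$, $\Delta=\Delta_1\cup\cdots\cup\Delta_r$; $V(\Delta_i)$ is the vertex set of $\Delta_i$. Conditions: (i) $|V(\Delta_i)\cap V(\Delta_j)|\le1$ for all $i<j$; (ii) $V(\Delta_i)\cap V(\Delta_j)\cap V(\Delta_k)=\emptyset$ for all $i<j<k$. For such $\Delta$, $G_\Delta$ is the simple graph on vertices $v_1,\dots,v_r$ with an edge $\{v_i,v_j\}$ ($i\ne j$) iff $V(\Delta_i)\cap V(\Delta_j)\ne\emptyset$. $\Delta$ is closed with respect to a labeling of its vertices by $[n]$ if for any two facets $F=\{a_1<\dots<a_m\}$, $G=\{b_1<\dots<b_m\}$ with $a_i=b_i$ for some $i$, every $m$-subset of $F\cup G$ is a facet of $\Delta$; $\Delta$ is closed if some labeling makes it closed. *)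

From mathcomp Require Import all_boot all_order.
From mathcomp Require Import fingroup perm.
Set Implicit Arguments. Unset Strict Implicit. Unset Printing Implicit Defensive.

(* A pure (m-1)-dimensional simplicial complex on the vertex set 'I_n
   (= [n]) is represented by its set of facets  Fc : {set {set 'I_n}},
   every facet having exactly m vertices.  The faces are all subsets of
   facets; the (m-1)-dimensional faces are exactly the facets. *)

Definition pure_complex (n m : nat) (Fc : {set {set 'I_n}}) : bool :=
  (Fc != set0) && [forall f in Fc, #|f| == m].

(* Gam is a simplex of dimension >= m-1 whose (m-1)-skeleton is contained
   in Delta: every m-subset of Gam is a facet of Delta. *)
Definition skel_in (n m : nat) (Fc : {set {set 'I_n}}) (Gam : {set 'I_n}) : bool :=
  (m <= #|Gam|) && [forall S : {set 'I_n}, (S \subset Gam) && (#|S| == m) ==> (S \in Fc)].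

(* The cliques: maximal elements Gamma_i of the family above.  Since the
   (m-1)-skeleton of Gamma_i has vertex set Gamma_i, V(Delta_i) = Gamma_i;
   we index the cliques (the vertices v_i of G_Delta) by these sets. *)
Definition cliques (n m : nat) (Fc : {set {set 'I_n}}) : {set {set 'I_n}} :=
  [set Gam | maxset (skel_in m Fc) Gam].

Definition cond_i (n m : nat) (Fc : {set {set 'I_n}}) : Prop :=
  forall A B, A \in cliques m Fc -> B \in cliques m Fc -> A != B ->
    #|A :&: B| <= 1.

Definition cond_ii (n m : nat) (Fc : {set {set 'I_n}}) : Prop :=
  forall A B C, A \in cliques m Fc -> B \in cliques m Fc -> C \in cliques m Fc ->
    A != B -> A != C -> B != C -> A :&: B :&: C = set0.

Definition G_degree (n m : nat) (Fc : {set {set 'I_n}}) (A : {set 'I_n}) : nat :=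
  #|[set B in cliques m Fc | (B != A) && (A :&: B != set0)]|.

(* Closedness w.r.t. the labeling given by the natural order of 'I_n.
   For facets f = {a_1<..<a_m}, g = {b_1<..<b_m}: a_i = b_i for some i
   iff some common vertex x has the same position in f and in g, i.e. the
   same number of smaller elements. *)
Definition closed_nat (n m : nat) (Fc : {set {set 'I_n}}) : Prop :=
  forall f g, f \in Fc -> g \in Fc ->
    (exists x, [/\ x \in f, x \in g &
        #|[set y in f | (y < x)%N]| = #|[set y in g | (y < x)%N]|]) ->
    forall S : {set 'I_n}, S \subset f :|: g -> #|S| = m -> S \in Fc.

Definition closed_complex (n m : nat) (Fc : {set {set 'I_n}}) : Prop :=
  exists p : {perm 'I_n}, closed_nat m [set p @: f | f : {set 'I_n} in Fc].

From mathcomp Require Import all_boot all_order.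
From mathcomp Require Import fingroup perm zify.

Set Implicit Arguments. Unset Strict Implicit. Unset Printing Implicit Defensive.

(* Fix a labeling p making Delta closed and rank the vertices of A by p.
   The heart of the proof (shared_vertex_rank) is that a vertex x that A
   shares with another clique B has fewer than m-1 vertices of A below it
   or fewer than m-1 above it.  Otherwise, pick an m-subset G of B through
   x; if x has t vertices of G below it, there is an m-subset F of A through
   x with exactly t vertices below x as well (sub_with_rank).  Closedness
   makes every m-subset of F u G a facet, so F u G lies in one clique C,
   and by (i) C = A (they share F) and C = B (they share G): absurd.
   Since ranks are injective (below_inj), at most m-1 vertices of A have
   "below-rank" < m-1 and at most m-1 have "above-rank" < m-1.  Finally,
   by (ii) the neighbours of A meet A in pairwise distinct vertices, so the
   degree of A is bounded by the size of any set of vertices containing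
   all shared vertices (G_degree_le_shared), e.g. A itself. *)

Lemma pick_sub (T : finType) (S : {set T}) k :
  k <= #|S| -> exists2 U : {set T}, U \subset S & #|U| = k.
Proof.
case/card_geqP=> s [s_uniq s_size s_sub].
exists [set x in s]; first by apply/subsetP=> x; rewrite inE => /s_sub.
by rewrite cardsE (card_uniqP s_uniq).
Qed.

Lemma pick_sub_with (T : finType) (S : {set T}) x k :
  x \in S -> k < #|S| ->
  exists G : {set T}, [/\ G \subset S, x \in G & #|G| = k.+1].
Proof.
move=> xS ltkS.
have [U sU cU] : exists2 U : {set T}, U \subset S :\ x & #|U| = k.
  by apply: pick_sub; move: ltkS; rewrite (cardsD1 x S) xS.
have xU : x \notin U by apply/negP=> /(subsetP sU); rewrite !inE eqxx.
exists (x |: U); split; last by rewrite cardsU1 xU cU.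
- by rewrite subUset sub1set xS (subset_trans sU) ?subsetDl.
- exact: setU11.
Qed.

Definition below (T : finType) (R : rel T) (f : {set T}) (x : T) : nat :=
  #|[set y in f | R y x]|.
Definition above (T : finType) (R : rel T) (f : {set T}) (x : T) : nat :=
  below (fun a b => R b a) f x.

Section StrictOrderRanks.

Variables (T : finType) (R : rel T).
Hypothesis R_irr : irreflexive R.
Hypothesis R_trans : transitive R.
Hypothesis R_total : forall x y, x != y -> R x y || R y x.

Lemma below_lt_card (f : {set T}) x : x \in f -> below R f x < #|f|.
Proof.
move=> xf; apply: proper_card; apply/properP; split.
  by apply/subsetP=> y; rewrite inE => /andP [].
by exists x; rewrite // inE R_irr andbF.
Qed.

Lemma below_inj (f : {set T}) : {in f &, injective (below R f)}.
Proof.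
have below_mono x y : R x y -> x \in f -> below R f x < below R f y.
  move=> Rxy xf; apply: proper_card; apply/properP; split.
    by apply/subsetP=> z; rewrite !inE => /andP [-> /R_trans]; apply.
  by exists x; rewrite !inE ?xf ?Rxy ?R_irr.
move=> x y xf yf eq_xy; apply/eqP; apply: contraT => /R_total /orP [] Rxy.
  by have := below_mono _ _ Rxy xf; rewrite eq_xy ltnn.
by have := below_mono _ _ Rxy yf; rewrite eq_xy ltnn.
Qed.

(* By injectivity, fewer than k+1 elements of f have rank < k. *)
Lemma card_low_rank (f : {set T}) k : #|[set x in f | below R f x < k]| <= k.
Proof.
set X := [set x in f | _].
have inj : {in X &, injective (below R f)}.
  by move=> x y; rewrite !inE => /andP [xf _] /andP [yf _]; apply: below_inj.
rewrite cardE -(size_map (below R f)) -[k](size_iota 0).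
apply: uniq_leq_size.
  by rewrite map_inj_in_uniq ?enum_uniq // => x y; rewrite !mem_enum; apply: inj.
by move=> i /mapP [x]; rewrite mem_enum inE => /andP [_ lt] ->; rewrite mem_iota.
Qed.

Lemma R_asym x y : R x y -> ~~ R y x.
Proof. by move=> Rxy; apply/negP=> /(R_trans Rxy); rewrite R_irr. Qed.

Lemma sub_with_rank (A : {set T}) x k t :
  x \in A -> t <= k -> t <= below R A x -> k - t <= above R A x ->
  exists F : {set T}, [/\ F \subset A, x \in F, #|F| = k.+1 & below R F x = t].
Proof.
move=> xA le_tk /pick_sub [L sL cL] /pick_sub [U sU cU].
have Lx y : y \in L -> (y \in A) && R y x by move/(subsetP sL); rewrite inE.
have Ux y : y \in U -> (y \in A) && R x y by move/(subsetP sU); rewrite inE.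
have xL : x \notin L by apply/negP=> /Lx; rewrite R_irr andbF.
have xU : x \notin U by apply/negP=> /Ux; rewrite R_irr andbF.
have LU : L :&: U = set0.
  apply/setP=> y; rewrite !inE; apply/negP=> /andP [].
  by move=> /Lx /andP [_ /R_asym/negbTE Ryx] /Ux /andP [_]; rewrite Ryx.
exists (x |: (L :|: U)); split.
- rewrite !subUset sub1set xA /=.
  by apply/andP; split; apply/subsetP=> y; [move/Lx | move/Ux] => /andP [].
- exact: setU11.
- by rewrite cardsU1 in_setU negb_or xL xU cardsU LU cards0 subn0 cL cU; lia.
- rewrite /below -cL; apply: eq_card => y; rewrite !inE.
  have [->|_] /= := eqVneq y x; first by rewrite R_irr (negbTE xL).
  case yL: (y \in L); first by case/andP: (Lx _ yL).
  by case yU: (y \in U) => //=; case/andP: (Ux _ yU) => _ /R_asym/negbTE.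
Qed.

End StrictOrderRanks.

(* The same bound for the above-rank, which is the rank for the converse
   order. *)
Lemma card_high_rank (T : finType) (R : rel T) :
  irreflexive R -> transitive R -> (forall x y, x != y -> R x y || R y x) ->
  forall (f : {set T}) k, #|[set x in f | above R f x < k]| <= k.
Proof.
move=> R_irr R_trans R_total f k.
apply: card_low_rank => [x | y x z Ryx Rzy | x y neq_xy]; first exact: R_irr.
- exact: R_trans Rzy Ryx.
- by rewrite orbC R_total.
Qed.

Section Labeling.

Variables (n : nat) (p : {perm 'I_n}).

Definition lab_rel : rel 'I_n := fun y x => (p y < p x)%N.

Lemma lab_irr : irreflexive lab_rel.
Proof. by move=> x; rewrite /lab_rel ltnn. Qed.

Lemma lab_trans : transitive lab_rel.
Proof. by move=> y x z; rewrite /lab_rel; apply: ltn_trans. Qed.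

Lemma lab_total x y : x != y -> lab_rel x y || lab_rel y x.
Proof.
move=> neq_xy; rewrite /lab_rel -neq_ltn.
by apply: contra neq_xy => /eqP/val_inj/perm_inj ->.
Qed.

(* Ranks after relabeling by p are ranks for lab_rel p, which is how
   closed_nat of the relabeled complex speaks about the original one. *)
Lemma below_relabel (f : {set 'I_n}) x :
  #|[set y in p @: f | (y < p x)%N]| = below lab_rel f x.
Proof.
rewrite /below -(card_imset [set y in f | lab_rel y x] (@perm_inj _ p)).
apply: eq_card => y; rewrite inE.
apply/andP/imsetP => [[/imsetP [z zf ->] lt_zx] | [z]].
  by exists z; rewrite // inE zf.
by rewrite inE => /andP [zf lt_zx] ->; rewrite imset_f.
Qed.

End Labeling.

Section Cliques.

Variables (n m : nat) (Fc : {set {set 'I_n}}).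

Lemma skel_facet (C S : {set 'I_n}) :
  skel_in m Fc C -> S \subset C -> #|S| = m -> S \in Fc.
Proof. by case/andP=> _ /forallP /(_ S) + sSC cS; rewrite sSC cS eqxx. Qed.

Lemma clique_skel (C : {set 'I_n}) : C \in cliques m Fc -> skel_in m Fc C.
Proof. by rewrite inE => /maxsetp. Qed.

Lemma clique_above (X : {set 'I_n}) :
  skel_in m Fc X -> exists2 C, C \in cliques m Fc & X \subset C.
Proof. by case/maxset_exists=> C maxC sXC; exists C; rewrite ?inE. Qed.

Lemma clique_eq_of_common (C D S : {set 'I_n}) :
  cond_i m Fc -> C \in cliques m Fc -> D \in cliques m Fc ->
  S \subset C -> S \subset D -> 1 < #|S| -> C = D.
Proof.
move=> ci Ccl Dcl sSC sSD lt1S; apply/eqP; apply: contraT => neq_CD.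
have sS : S \subset C :&: D by rewrite subsetI sSC.
by have := leq_trans lt1S (subset_leq_card sS); rewrite ltnNge ci.
Qed.

(* By condition (ii), each neighbour B of A can be assigned a vertex of
   A :&: B injectively; hence the degree of A is at most the size of any set
   X containing all vertices that A shares with other cliques. *)
Lemma G_degree_le_shared (A X : {set 'I_n}) :
  cond_ii m Fc -> A \in cliques m Fc ->
  (forall B x, B \in cliques m Fc -> B != A -> x \in A -> x \in B -> x \in X) ->
  G_degree m Fc A <= #|X|.
Proof.
move=> cii Acl sharedX.
pose N := [set B in cliques m Fc | (B != A) && (A :&: B != set0)].
pose phi B := [pick z in A :&: B].
have phiP B : B \in N -> exists2 z, phi B = Some z & z \in A :&: B.
  rewrite inE => /and3P [_ _ /set0Pn [y yAB]]; rewrite /phi.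
  by case: pickP => [z|none]; [exists z | rewrite none in yAB].
have phi_inj : {in N &, injective phi}.
  move=> B B' BN B'N eq_phi; apply/eqP; apply: contraT => neq_BB'.
  have [z phiB] := phiP _ BN; rewrite inE => /andP [zA zB].
  have [z' phiB'] := phiP _ B'N; rewrite -eq_phi phiB in phiB'; case: phiB' => <-.
  rewrite inE => /andP [_ zB'].
  move: BN B'N; rewrite [B \in N]inE [B' \in N]inE.
  move=> /and3P [Bcl neq_BA _] /and3P [B'cl neq_B'A _].
  have := cii A B B' Acl Bcl B'cl; rewrite ![A == _]eq_sym neq_BA neq_B'A neq_BB'.
  by move=> /(_ isT isT isT) /setP /(_ z); rewrite !inE zA zB zB'.
rewrite /G_degree -/N -(card_in_imset phi_inj) -(card_imset X (@Some_inj _)).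
apply: subset_leq_card; apply/subsetP=> _ /imsetP [B BN ->].
have [z -> /setIP [zA zB]] := phiP _ BN; apply: imset_f.
by move: BN; rewrite inE => /and3P [Bcl neq_BA _]; apply: (sharedX B).
Qed.

End Cliques.

Section ClosedComplex.

Variables (n m : nat) (Fc : {set {set 'I_n}}) (p : {perm 'I_n}).
Hypothesis m_ge3 : 2 <= m - 1.
Hypothesis p_closed : closed_nat m [set p @: f | f : {set 'I_n} in Fc].
Hypothesis ci : cond_i m Fc.

Lemma closed_transport (f g : {set 'I_n}) x :
  f \in Fc -> g \in Fc -> x \in f -> x \in g ->
  below (lab_rel p) f x = below (lab_rel p) g x ->
  forall S : {set 'I_n}, S \subset f :|: g -> #|S| = m -> S \in Fc.
Proof.
move=> fF gF xf xg eq_below S sS cS.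
have : p @: S \in [set p @: f | f : {set 'I_n} in Fc].
  apply: (p_closed (imset_f _ fF) (imset_f _ gF)).
  - by exists (p x); rewrite !imset_f // !below_relabel.
  - by rewrite -imsetU imsetS.
  - by rewrite card_imset //; apply: perm_inj.
by case/imsetP=> S' S'F /(imset_inj (@perm_inj _ p)) ->.
Qed.

Lemma shared_vertex_rank (A B : {set 'I_n}) x :
  A \in cliques m Fc -> B \in cliques m Fc -> B != A -> x \in A -> x \in B ->
  (below (lab_rel p) A x < m - 1) || (above (lab_rel p) A x < m - 1).
Proof.
move=> Acl Bcl neq_BA xA xB; rewrite !ltnNge -negb_and.
apply/negP=> /andP [low_big high_big].
set k := m - 1 in low_big high_big; have m_eq : m = k.+1 by rewrite /k; lia.
have [G [sGB xG cG]] : exists G : {set 'I_n}, [/\ G \subset B, x \in G & #|G| = k.+1].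
  by apply: pick_sub_with; case/andP: (clique_skel Bcl); rewrite m_eq.
have le_tk : below (lab_rel p) G x <= k.
  by rewrite -ltnS -cG (below_lt_card (@lab_irr n p)).
have [F [sFA xF cF eq_below]] :=
  sub_with_rank (@lab_irr n p) (@lab_trans n p) xA le_tk
    (leq_trans le_tk low_big) (leq_trans (leq_subr _ k) high_big).
have FF : F \in Fc by apply: (skel_facet (clique_skel Acl)); rewrite // m_eq.
have GF : G \in Fc by apply: (skel_facet (clique_skel Bcl)); rewrite // m_eq.
have skFG : skel_in m Fc (F :|: G).
  apply/andP; split; first by rewrite m_eq -cF subset_leq_card ?subsetUl.
  apply/forallP=> S; apply/implyP=> /andP [sS /eqP cS].
  exact: closed_transport FF GF xF xG eq_below S sS cS.
have [C Ccl sFGC] := clique_above skFG.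
have CA : C = A.
  apply: clique_eq_of_common ci Ccl Acl (subset_trans (subsetUl F G) sFGC) sFA _.
  by rewrite cF; lia.
have CB : C = B.
  apply: clique_eq_of_common ci Ccl Bcl (subset_trans (subsetUr F G) sFGC) sGB _.
  by rewrite cG; lia.
by rewrite -CB CA eqxx in neq_BA.
Qed.

End ClosedComplex.

Theorem lemma3p1 (n m : nat) (Fc : {set {set 'I_n}}) :
  2 <= m - 1 ->
  pure_complex m Fc ->
  closed_complex m Fc ->
  cond_i m Fc ->
  cond_ii m Fc ->
  forall A, A \in cliques m Fc ->
    G_degree m Fc A <= minn #|A| (2 * (m - 1)).
Proof.
move=> m_ge3 _ [p p_closed] ci cii A Acl.
rewrite leq_min; apply/andP; split.
  by apply: G_degree_le_shared cii Acl _ => B x _ _ xA.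
pose low := [set x in A | below (lab_rel p) A x < m - 1].
pose high := [set x in A | above (lab_rel p) A x < m - 1].
apply: leq_trans (G_degree_le_shared (X := low :|: high) cii Acl _) _.
  move=> B x Bcl neq_BA xA xB; rewrite !inE xA /=.
  exact: (shared_vertex_rank m_ge3 p_closed ci Acl Bcl neq_BA xA xB).
rewrite mul2n -addnn (leq_trans (leq_card_setU low high)) // leq_add //.
- exact: (card_low_rank (@lab_irr n p) (@lab_trans n p) (@lab_total n p)).
- exact: (card_high_rank (@lab_irr n p) (@lab_trans n p) (@lab_total n p)).
Qed.
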